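(* Every polymatroid game possesses a pure Nash equilibrium. That is: let $N=\{1,\dots,n\}$ be a finite set of players and $E=\{1,\dots,m\}$ a finite set of resources; for each player $i$ let $f_i:2^E\to\mathbb{N}$ be an integral polymatroid rank function and $d_i\in\mathbb{N}$ with $d_i\le f_i(E)$, and let the strategy set of player $i$ be $X_i=\mathbb{B}_{f_i}(d_i)$; for each $i\in N,e\in E$ let $C_{i,e}:\mathbb{N}\times\mathbb{N}\to\mathbb{R}_+$ be regular, and let the private cost of player $i$ in profile $\vec x=(\vec x_j)_{j\in N}\in X_1\times\dots\times X_n$ be $\pi_i(\vec x)=\sum_{e\in E}C_{i,e}(x_{i,e};x_{-i,e})$ with $x_{-i,e}=\sum_{j\neq i}x_{j,e}$. Then there exists a profile $\vec x$ such that for every $i\in N$ and every $\vec y_i\in X_i$, $\pi_i(\vec x)\le\pi_i(\vec y_i,\vec x_{-i})$.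
   Context: $\mathbb{N}=\{0,1,2,\dots\}$. An integral polymatroid rank function is $f:2^E\to\mathbb{N}$ with $f(\emptyset)=0$, monotone ($f(U)\le f(V)$ for $U\subseteq V$) and submodular. $x_i(U)=\sum_{e\in U}x_{i,e}$; $\mathbb{B}_f(d)=\{\vec x\in\mathbb{N}^E: x(U)\le f(U)\ \forall U\subseteq E,\ x(E)=d\}$. For $C:\mathbb{N}\times\mathbb{N}\to\mathbb{R}$, $C^-(x;t)=C(x;t)-C(x-1;t)$ for $x\ge1$; $C$ is regular if $C^-(x;t)\le C^-(x;t+1)$ and $C^-(x;t+1)\le C^-(x+1;t)$ for all $x\ge1$, $t\in\mathbb{N}$. *)

From mathcomp Require Import all_boot all_order all_algebra.
From mathcomp Require Import reals.
Set Implicit Arguments. Unset Strict Implicit. Unset Printing Implicit Defensive.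
Import Order.TTheory GRing.Theory Num.Theory.

Definition polymatroid_rank (E : finType) (f : {set E} -> nat) : Prop :=
  [/\ f set0 = 0%N,
      (forall U V : {set E}, U \subset V -> (f U <= f V)%N) &
      (forall U V : {set E}, (f (U :|: V) + f (U :&: V) <= f U + f V)%N)].

Definition xsum (E : finType) (x : E -> nat) (U : {set E}) : nat :=
  (\sum_(e in U) x e)%N.

Definition in_polytope (E : finType) (f : {set E} -> nat) (d : nat)
  (x : E -> nat) : Prop :=
  (forall U : {set E}, (xsum x U <= f U)%N) /\ xsum x [set: E] = d.

Local Open Scope ring_scope.

Definition Cminus (R : ringType) (C : nat -> nat -> R) (x t : nat) : R :=
  C x t - C x.-1 t.

Definition regular (R : numDomainType) (C : nat -> nat -> R) : Prop :=
  forall x t : nat, (1 <= x)%N ->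
    Cminus C x t <= Cminus C x t.+1 /\ Cminus C x t.+1 <= Cminus C x.+1 t.

Definition others_load (n m : nat) (x : 'I_n -> 'I_m -> nat) (i : 'I_n)
  (e : 'I_m) : nat := (\sum_(j < n | j != i) x j e)%N.

Definition private_cost (R : ringType) (n m : nat)
  (C : 'I_n -> 'I_m -> nat -> nat -> R) (x : 'I_n -> 'I_m -> nat) (i : 'I_n) : R :=
  \sum_(e < m) C i e (x i e) (others_load x i e).

Definition deviate (n m : nat) (x : 'I_n -> 'I_m -> nat) (i : 'I_n)
  (y : 'I_m -> nat) : 'I_n -> 'I_m -> nat :=
  fun j => if j == i then y else x j.

From mathcomp Require Import all_boot all_order all_algebra.
From mathcomp Require Import reals.
From mathcomp Require Import zify lra.
From Stdlib Require Import Classical.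
Import Order.TTheory GRing.Theory Num.Theory.
Set Implicit Arguments. Unset Strict Implicit. Unset Printing Implicit Defensive.

(* Against fixed loads T of the others, a player minimises the separable cost
   sum_e C_e(y_e; T_e), whose marginal costs are nondecreasing by regularity, over
   the integral base polytope B_f(d); by the exchange property of B_f(d), a
   strategy is optimal as soon as no single-unit exchange improves it.
   Equilibria are built by induction on the total demand.  Give one player of an
   equilibrium one more unit, placed greedily; the resource h receiving it is now
   the only disturbance, and every player remains a best response to the others'
   loads with one unit removed from h.  Hence a player that is not a best response
   repairs itself by moving a single unit from h to some g, after which the same
   holds with g in place of h.  The load profile stays fixed up to the position of
   that unit, so units can be priced by numbers depending only on the player, the
   resource and the unit's index, and each move replaces a unit by a strictly
   cheaper one: the sum of the ranks of the held units decreases, and the repair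
   terminates in an equilibrium. *)

Definition add_unit (T : eqType) (y : T -> nat) (b : T) : T -> nat :=
  fun e => (y e + (e == b))%N.
Definition sub_unit (T : eqType) (y : T -> nat) (a : T) : T -> nat :=
  fun e => (y e - (e == a))%N.
Definition move_unit (T : eqType) (y : T -> nat) (a b : T) : T -> nat :=
  add_unit (sub_unit y a) b.

Lemma big_move_unit (V : Type) (idx : V) (op : Monoid.com_law idx) (E : finType)
    (phi : E -> nat -> V) (y : E -> nat) a b : a != b -> (0 < y a)%N ->
  op (op (\big[op/idx]_e phi e (move_unit y a b e)) (phi a (y a))) (phi b (y b)) =
  op (op (\big[op/idx]_e phi e (y e)) (phi a (y a).-1)) (phi b (y b).+1).
Proof.
move=> ab ya; rewrite (bigD1 a) // (bigD1 b) 1?eq_sym //= [in RHS](bigD1 a) //.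
rewrite [in RHS](bigD1 b) 1?eq_sym //=.
rewrite (eq_bigr (fun e => phi e (y e))) => [|e /andP[ea eb]]; last first.
  by rewrite /move_unit /add_unit /sub_unit (negbTE ea) (negbTE eb) subn0 addn0.
rewrite /move_unit /add_unit /sub_unit !eqxx (negbTE ab) eq_sym (negbTE ab).
by rewrite subn0 subn1 addn0 addn1 !Monoid.mulmA [LHS](ACl (4*5*3*1*2)).
Qed.

Lemma sumn_move_unit (E : finType) (phi : E -> nat -> nat) (y : E -> nat) a b :
  a != b -> 0 < y a ->
  \sum_e phi e (move_unit y a b e) + phi a (y a) + phi b (y b) =
  \sum_e phi e (y e) + phi a (y a).-1 + phi b (y b).+1.
Proof. exact: big_move_unit. Qed.

Section UnitMoves.
Variable T : eqType.
Implicit Types (y : T -> nat) (a b e g h : T).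

Lemma add_unit_eq y b : add_unit y b b = (y b).+1.
Proof. by rewrite /add_unit eqxx addn1. Qed.

Lemma add_unit_ne y b e : e != b -> add_unit y b e = y e.
Proof. by move=> eb; rewrite /add_unit (negbTE eb) addn0. Qed.

Lemma add_sub_unit y a : (0 < y a)%N -> add_unit (sub_unit y a) a =1 y.
Proof. by move=> ya e; rewrite /add_unit /sub_unit; case: eqP => [->|] /=; lia. Qed.

Lemma sub_unit_id y a : y a = 0%N -> sub_unit y a =1 y.
Proof. by move=> ya e; rewrite /sub_unit; case: eqP => [->|] /=; lia. Qed.

Lemma move_unit_src y a b : a != b -> move_unit y a b a = (y a).-1.
Proof. by move=> ab; rewrite /move_unit /add_unit /sub_unit eqxx (negbTE ab); lia. Qed.

Lemma move_unit_dst y a b : a != b -> move_unit y a b b = (y b).+1.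
Proof. by move=> ab; rewrite /move_unit /add_unit /sub_unit eqxx eq_sym (negbTE ab); lia. Qed.

Lemma move_unit_other y a b e : e != a -> e != b -> move_unit y a b e = y e.
Proof.
by move=> ea eb; rewrite /move_unit /add_unit /sub_unit (negbTE ea) (negbTE eb); lia.
Qed.

Lemma move_unit_add_unit y a b : move_unit (add_unit y a) a b =1 add_unit y b.
Proof. by move=> e; rewrite /move_unit /add_unit /sub_unit; lia. Qed.

Lemma move_unit_trans y h g b : move_unit (move_unit y h g) g b =1 move_unit y h b.
Proof. by move=> e; rewrite /move_unit /add_unit /sub_unit; lia. Qed.

Lemma move_unit_transC y h g a : (0 < y h)%N -> a != h -> a != g ->
  move_unit (move_unit y h g) a h =1 move_unit y a g.
Proof.
move=> yh ah ag e; rewrite /move_unit /add_unit /sub_unit.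
case: (eqVneq e a) => [->|_]; first by rewrite (negbTE ah) (negbTE ag); lia.
by case: (eqVneq e h) => [->|_] /=; lia.
Qed.

End UnitMoves.

Lemma setU_closed_max (E : finType) (P : pred {set E}) : P set0 ->
  (forall U V, P U -> P V -> P (U :|: V)) ->
  exists D, P D /\ forall U, P U -> U \subset D.
Proof.
move=> P0 PU; exists (\bigcup_(U | P U) U); split; last by move=> U; apply: bigcup_sup.
by apply: (big_ind P).
Qed.

Lemma setI_closed_min (E : finType) (P : pred {set E}) U0 : P U0 ->
  (forall U V, P U -> P V -> P (U :&: V)) ->
  exists M, P M /\ forall U, P U -> M \subset U.
Proof.
move=> PU0 PI; exists (U0 :&: \bigcap_(U | P U) U); split.
  apply: (big_ind (fun X => P (U0 :&: X))) => [|X Y PX PY|U PU]; last exact: PI.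
    by rewrite setIT.
  by rewrite setIIr; apply: PI.
by move=> U PU; rewrite setIC; apply: subset_trans (subsetIl _ _) (bigcap_inf _ PU).
Qed.

Section Polytope.
Variables (E : finType) (f : {set E} -> nat).
Implicit Types (y z : E -> nat) (U V : {set E}) (a b e g h : E) (d : nat).

Definition tight y U := f U <= xsum y U.

Lemma eq_xsum y z U : y =1 z -> xsum y U = xsum z U.
Proof. by move=> yz; apply: eq_bigr => e _; rewrite yz. Qed.

Lemma eq_in_polytope d y z : y =1 z -> in_polytope f d y -> in_polytope f d z.
Proof. by move=> yz [yU yE]; split => [U|]; rewrite -(eq_xsum _ yz). Qed.

Lemma xsum_add_unit y b U : xsum (add_unit y b) U = xsum y U + (b \in U).
Proof.
rewrite /xsum /add_unit big_split /=; congr (_ + _).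
case: (boolP (b \in U)) => bU; last first.
  by rewrite big1 // => e eU; apply/eqP; rewrite eqb0; apply: contraNneq bU => <-.
by rewrite (bigD1 b) //= eqxx big1 // => e /andP[_ /negbTE ->].
Qed.

Lemma xsum_move_unit y a b U : 0 < y a ->
  xsum (move_unit y a b) U + (a \in U) = xsum y U + (b \in U).
Proof.
move=> ya; rewrite xsum_add_unit -(eq_xsum U (add_sub_unit ya)) xsum_add_unit.
by rewrite addnAC.
Qed.

Lemma xsum_move_unit_ge y h g U : 0 < y h -> (h \notin U) || (g \in U) ->
  xsum y U <= xsum (move_unit y h g) U.
Proof.
move=> yh hgU; have := xsum_move_unit g U yh.
by case: (h \in U) hgU; case: (g \in U) => //=; lia.
Qed.

Lemma xsum_setID y U V : xsum y U = xsum y (U :&: V) + xsum y (U :\: V).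
Proof. exact: big_setID. Qed.

Lemma xsum_setUI y U V : xsum y (U :|: V) + xsum y (U :&: V) = xsum y U + xsum y V.
Proof.
rewrite (xsum_setID y (U :|: V) V) (xsum_setID y U V).
by rewrite [(U :|: V) :&: V]setIC setKU setDUl setDv setU0; lia.
Qed.

Lemma xsum_ltn y z U e : e \in U -> z e < y e -> (forall g, g \in U -> z g <= y g) ->
  xsum z U < xsum y U.
Proof.
move=> eU lt le; rewrite /xsum (bigD1 e) //= [X in _ < X](bigD1 e) //= -addSn.
by apply: leq_add => //; apply: leq_sum => g /andP[gU _]; apply: le.
Qed.

Lemma in_polytope_le_demand d y e : in_polytope f d y -> y e <= d.
Proof. by case=> _ <-; rewrite /xsum (bigD1 e) ?inE //= leq_addr. Qed.

Lemma in_polytope_leq_eq d y z : in_polytope f d y -> in_polytope f d z ->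
  (forall e, y e <= z e) -> y =1 z.
Proof.
move=> [_ yE] [_ zE] yz e; apply/eqP; rewrite eqn_leq yz leqNgt; apply/negP => zy.
by have := xsum_ltn (in_setT e) zy (fun g _ => yz g); rewrite yE zE ltnn.
Qed.

Definition in_polytopeb d y := [forall U, xsum y U <= f U] && (xsum y setT == d).

Lemma in_polytopeP d y : reflect (in_polytope f d y) (in_polytopeb d y).
Proof.
apply: (iffP andP) => [[/forallP yU /eqP yE] | [yU yE]]; first by split.
by split; [apply/forallP | apply/eqP].
Qed.

Lemma in_polytope_add_unitP d y b : in_polytope f d y ->
  in_polytope f d.+1 (add_unit y b) <-> forall U, b \in U -> ~~ tight y U.
Proof.
rewrite /tight => -[yU yE]; split=> [[zU _] U bU | H].
  by have := zU U; rewrite xsum_add_unit bU -ltnNge addn1.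
split=> [U|]; last by rewrite xsum_add_unit yE inE addn1.
rewrite xsum_add_unit; case: (boolP (b \in U)) => [bU|_]; last by rewrite addn0.
by have := H U bU; rewrite -ltnNge addn1.
Qed.

Lemma in_polytope_move_unitP d y a b : in_polytope f d y -> a != b -> 0 < y a ->
  in_polytope f d (move_unit y a b) <-> forall U, b \in U -> a \notin U -> ~~ tight y U.
Proof.
rewrite /tight => -[yU yE] ab ya; split=> [[zU _] U bU aU | H].
  by have := zU U; have := xsum_move_unit b U ya; rewrite bU (negbTE aU) -ltnNge; lia.
split=> [U|]; last by have := xsum_move_unit b setT ya; rewrite !inE yE; lia.
have := xsum_move_unit b U ya; have := yU U.
case: (boolP (b \in U)) => bU; case: (boolP (a \in U)) => aU /=; try lia.
by have := H U bU aU; rewrite -ltnNge; lia.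
Qed.

Lemma in_polytope_move_unit_dominated d d' y z a b :
  in_polytope f d y -> in_polytope f d' z -> a != b -> 0 < y a -> 0 < z a ->
  (forall U, b \in U -> a \notin U -> xsum y U <= xsum z U) ->
  in_polytope f d' (move_unit z a b) -> in_polytope f d (move_unit y a b).
Proof.
move=> yB zB ab ya za yz /(in_polytope_move_unitP zB ab za) zab.
apply/(in_polytope_move_unitP yB ab ya) => U bU aU; have := zab U bU aU.
by rewrite /tight -!ltnNge => /(leq_ltn_trans (yz U bU aU)).
Qed.

Section Polymatroid.
Hypothesis fP : polymatroid_rank f.

Lemma tight_set0 y : tight y set0.
Proof. by rewrite /tight; case: fP => -> _ _. Qed.

Lemma tight_setUI d y U V : in_polytope f d y -> tight y U -> tight y V ->
  tight y (U :|: V) /\ tight y (U :&: V).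
Proof.
case: fP => _ _ fsub [yU _]; rewrite /tight => tU tV.
have := fsub U V; have := xsum_setUI y U V; have := yU (U :|: V); have := yU (U :&: V).
by split; lia.
Qed.

(* [setT] is allowed for [M] because y and z have the same total, which is all
   that is used of a z-tight set. *)
Lemma tight_xsum_setD d y z D M : in_polytope f d y -> in_polytope f d z ->
  tight y D -> tight z M || (M == setT) -> xsum y (M :\: D) <= xsum z (M :\: D).
Proof.
case: fP => _ _ fsub [yU yE] [zU zE]; rewrite /tight => tD /orP[tM | /eqP->].
  have := fsub M D; have := xsum_setUI y M D; have := yU (M :|: D); have := zU (M :&: D).
  by have := xsum_setID y M D; have := xsum_setID z M D; lia.
have := xsum_setID y setT D; have := xsum_setID z setT D; have := zU D.
by rewrite setTI yE zE; lia.
Qed.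

Lemma in_polytope_augment d y : in_polytope f d y -> d < f setT ->
  exists e, in_polytope f d.+1 (add_unit y e).
Proof.
move=> yB dlt; have [D [tD maxD]] := setU_closed_max (tight_set0 y)
  (fun U V tU tV => (tight_setUI yB tU tV).1).
have [e _ eD] : exists2 e, e \in setT & e \notin D.
  apply/subsetPn; rewrite subTset; apply: contraTneq tD => ->.
  by rewrite /tight -ltnNge; case: yB => _ ->.
exists e; apply/(in_polytope_add_unitP _ yB) => U eU.
by apply: contraNN eD => tU; apply: subsetP (maxD U tU) e eU.
Qed.

Lemma in_polytope_exchange d y z e : in_polytope f d y -> in_polytope f d z ->
  z e < y e -> exists g, [/\ y g < z g, in_polytope f d (move_unit y e g)
                                       & in_polytope f d (move_unit z g e)].
Proof.
move=> yB zB zye; have ye : 0 < y e := leq_ltn_trans (leq0n _) zye.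
have [D [/andP[tD eD] maxD]] : exists D, (tight y D && (e \notin D)) /\
    forall U, tight y U && (e \notin U) -> U \subset D.
  apply: (@setU_closed_max _ (fun U => tight y U && (e \notin U))) => [|U V].
    by rewrite /= tight_set0 inE.
  move=> /andP[tU eU] /andP[tV eV].
  by rewrite (tight_setUI yB tU tV).1 inE negb_or eU eV.
have [M [/andP[eM tM] minM]] : exists M : {set E}, ((e \in M) && (tight z M || (M == setT))) /\
    forall U, (e \in U) && (tight z U || (U == setT)) -> M \subset U.
  apply: (@setI_closed_min _ (fun U => (e \in U) && (tight z U || (U == setT))) setT).
    by rewrite inE eqxx orbT.
  move=> U V /andP[eU tU] /andP[eV tV]; rewrite inE eU eV /=.
  case/orP: tU => [tU | /eqP->]; last by rewrite setTI.
  case/orP: tV => [tV | /eqP->]; last by rewrite setIT tU.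
  by rewrite (tight_setUI zB tU tV).2.
have [g /and3P[gM gD yzg]] : exists g, [&& g \in M, g \notin D & y g < z g].
  apply/existsP; apply: contraT => /existsPn noG.
  have zy g : g \in M :\: D -> z g <= y g.
    by rewrite inE => /andP[gD gM]; move: (noG g); rewrite gM gD /= -leqNgt.
  have := xsum_ltn (_ : e \in M :\: D) zye zy; rewrite inE eM eD => /(_ isT).
  by rewrite ltnNge (tight_xsum_setD yB zB tD tM).
have ge : g != e by apply: contraTneq yzg => ->; rewrite -leqNgt ltnW.
exists g; split => //.
  apply/(in_polytope_move_unitP yB _ ye) => [|U gU eU]; first by rewrite eq_sym.
  apply: contraNN gD => tU; apply: (subsetP (maxD U _)) gU.
  by rewrite tU eU.
apply/(in_polytope_move_unitP zB ge (leq_ltn_trans (leq0n _) yzg)) => U eU gU.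
apply: contraNN gU => tU; apply: (subsetP (minM U _)) gM.
by rewrite eU tU.
Qed.

Lemma in_polytope_move_unit2 d y h g a b : in_polytope f d y -> 0 < y h ->
  h != g -> a != b -> 0 < y a -> a != h -> a != g -> b != h ->
  in_polytope f d (move_unit y h g) ->
  in_polytope f d (move_unit (move_unit y h g) a b) ->
  in_polytope f d (move_unit y a b) \/
  in_polytope f d (move_unit y a g) /\ in_polytope f d (move_unit y h b).
Proof.
move=> yB yh hg ab ya ah ag bh y'B.
have y'a : 0 < move_unit y h g a by rewrite move_unit_other.
move=> /(in_polytope_move_unitP y'B ab y'a) y'ab.
have xs U := xsum_move_unit g U yh.
case: (boolP [exists U : {set E}, [&& b \in U, a \notin U & tight y U]]);
  last first => [noU | /existsP[U /and3P[bU aU tU]]].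
  left; apply/(in_polytope_move_unitP yB ab ya) => U bU aU.
  by apply: contra noU => tU; apply/existsP; exists U; rewrite bU aU tU.
right; have := y'ab U bU aU; have := xs U; move: tU; rewrite /tight -ltnNge => tU xsU y'U.
have [hU gU] : h \in U /\ g \notin U by move: xsU; case: (h \in U); case: (g \in U); lia.
split.
  apply/(in_polytope_move_unitP yB ag ya) => V gV aV; apply/negP => tV.
  have [tW _] := tight_setUI yB tU tV.
  have := y'ab (U :|: V); rewrite !inE bU (negbTE aU) (negbTE aV) /= => /(_ isT isT).
  by have := xs (U :|: V); rewrite !inE hU gV /= -ltnNge; move: tW; rewrite /tight; lia.
apply/(in_polytope_move_unitP yB _ yh) => [|V bV hV]; first by rewrite eq_sym.
apply/negP => tV; have [_ tW] := tight_setUI yB tU tV.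
have := y'ab (U :&: V); rewrite !inE bU bV (negbTE aU) /= => /(_ isT isT).
have := xs (U :&: V); rewrite !inE (negbTE gU) (negbTE hV) andbF /= -ltnNge.
by move: tW; rewrite /tight; lia.
Qed.

End Polymatroid.
End Polytope.

Local Open Scope ring_scope.

Section Regular.
Variables (R : numDomainType) (C : nat -> nat -> R).
Hypothesis CR : regular C.

Lemma Cminus_homo_load k t t' : (1 <= k)%N -> (t <= t')%N -> Cminus C k t <= Cminus C k t'.
Proof.
by move=> k1; apply: (homo_leq (f := Cminus C k) lexx le_trans) => s; case: (CR s k1).
Qed.

Lemma Cminus_diag k t : (1 <= k)%N -> Cminus C k t.+1 <= Cminus C k.+1 t.
Proof. by move=> k1; case: (CR t k1). Qed.

Lemma Cminus_homo_units k k' t : (1 <= k)%N -> (k <= k')%N -> Cminus C k t <= Cminus C k' t.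
Proof.
have step i : Cminus C i.+1 t <= Cminus C i.+2 t.
  by apply: le_trans (Cminus_diag _ _); case: (CR t (ltn0Sn i)).
case: k => // k _; case: k' => // k'; rewrite ltnS.
exact: (homo_leq (f := fun i => Cminus C i.+1 t) lexx le_trans step).
Qed.

Lemma Cminus_diag_pred k t : (1 <= k)%N -> Cminus C k t <= Cminus C k.+1 t.-1.
Proof. by case: t => [|t] k1; [apply: Cminus_homo_units | apply: Cminus_diag]. Qed.

End Regular.

Section SeparableCost.
Variables (R : realDomainType) (E : finType) (C : E -> nat -> nat -> R).
Implicit Types (T y z : E -> nat) (a b e g h : E) (f : {set E} -> nat) (d : nat).

Definition sep_cost T y := \sum_e C e (y e) (T e).

Definition marginal T e k := Cminus (C e) k (T e).

Lemma sep_cost_move_unit T y a b : a != b -> (0 < y a)%N ->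
  sep_cost T (move_unit y a b) = sep_cost T y - marginal T a (y a) + marginal T b (y b).+1.
Proof.
move=> ab ya; have := big_move_unit +%R (fun e k => C e k (T e)) ab ya.
by rewrite /marginal /Cminus /sep_cost /=; lra.
Qed.

Lemma marginal_add_unit_ne T h e k : e != h -> marginal (add_unit T h) e k = marginal T e k.
Proof. by move=> eh; rewrite /marginal /add_unit (negbTE eh) addn0. Qed.

Lemma marginal_sub_unit_ne T h e k : e != h -> marginal (sub_unit T h) e k = marginal T e k.
Proof. by move=> eh; rewrite /marginal /sub_unit (negbTE eh) subn0. Qed.

Definition optimal f d T y :=
  in_polytope f d y /\ forall z, in_polytope f d z -> sep_cost T y <= sep_cost T z.

Definition locally_optimal f d T y :=
  in_polytope f d y /\ forall a b, a != b -> (0 < y a)%N ->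
    in_polytope f d (move_unit y a b) -> marginal T a (y a) <= marginal T b (y b).+1.

Lemma eq_optimal f d T T' y y' : T =1 T' -> y =1 y' -> optimal f d T y -> optimal f d T' y'.
Proof.
move=> TT' yy' [yB ymin]; split=> [|z zB]; first exact: eq_in_polytope yy' yB.
have eqT w w' : w =1 w' -> sep_cost T w = sep_cost T' w'.
  by move=> ww'; apply: eq_bigr => e _; rewrite TT' ww'.
by rewrite -(eqT y) // -(eqT z) //; apply: ymin.
Qed.

Lemma optimal_locally f d T y : optimal f d T y -> locally_optimal f d T y.
Proof.
move=> [yB ymin]; split=> // a b ab ya abB.
by have := ymin _ abB; rewrite sep_cost_move_unit //; lra.
Qed.

Lemma not_locally_optimal f d T y : in_polytope f d y -> ~ locally_optimal f d T y ->
  exists a b, [/\ a != b, (0 < y a)%N, in_polytope f d (move_unit y a b)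
                & marginal T b (y b).+1 < marginal T a (y a)].
Proof.
move=> yB nly; apply: NNPP => nab; apply: nly; split=> // a b ab ya abB.
by rewrite leNgt; apply/negP => lt; apply: nab; exists a, b.
Qed.

Section RegularCost.
Hypothesis CR : forall e, regular (C e).

Lemma marginal_homo_load T T' e k : (1 <= k)%N -> (T e <= T' e)%N ->
  marginal T e k <= marginal T' e k.
Proof. exact: Cminus_homo_load. Qed.

Lemma marginal_homo_units T e k k' : (1 <= k)%N -> (k <= k')%N ->
  marginal T e k <= marginal T e k'.
Proof. exact: Cminus_homo_units. Qed.

Lemma marginal_add_unit_pred T h k : (1 < k)%N ->
  marginal (add_unit T h) h k.-1 <= marginal T h k.
Proof.
move=> k1; rewrite /marginal /add_unit eqxx addn1 -{2}(ltn_predK k1).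
by apply: Cminus_diag => //; lia.
Qed.

Lemma marginal_sub_unit_succ T h k : (1 <= k)%N ->
  marginal T h k <= marginal (sub_unit T h) h k.+1.
Proof. by move=> k1; rewrite /marginal /sub_unit eqxx subn1; apply: Cminus_diag_pred. Qed.

Variable f : {set E} -> nat.
Hypothesis fP : polymatroid_rank f.

Lemma locally_optimal_optimal d T y : locally_optimal f d T y -> optimal f d T y.
Proof.
move=> [yB ly]; split=> // z; have [N] := ubnP (\sum_e (y e - z e))%N.
elim: N z => // N IH z ltN zB.
have [e zye | zy] := pickP (fun e => z e < y e)%N; last first.
  have yz : y =1 z by apply: (in_polytope_leq_eq yB zB) => e; rewrite leqNgt zy.
  by rewrite le_eqVlt; apply/orP; left; apply/eqP/eq_bigr => e _; rewrite yz.
have [g [yzg egB geB]] := in_polytope_exchange fP yB zB zye.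
have ge : g != e by apply: contraTneq yzg => ->; rewrite -leqNgt ltnW.
have zg : (0 < z g)%N := leq_ltn_trans (leq0n _) yzg.
apply: le_trans (IH _ _ geB) _.
  by have := sumn_move_unit (fun e k => y e - k)%N ge zg; lia.
rewrite sep_cost_move_unit //.
have eg : e != g by rewrite eq_sym.
have := ly e g eg (leq_ltn_trans (leq0n _) zye) egB.
have := marginal_homo_units T e (ltn0Sn (z e)) zye.
have := marginal_homo_units T g (ltn0Sn (y g)) yzg.
lra.
Qed.

Lemma optimal_add_unit d T y : optimal f d T y -> (d < f setT)%N ->
  exists e, optimal f d.+1 T (add_unit y e).
Proof.
move=> /optimal_locally[yB ly] dlt; have [e0 e0B] := in_polytope_augment fP yB dlt.
have e0B' : in_polytopeb f d.+1 (add_unit y e0) by apply/in_polytopeP.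
case: (arg_minP (P := fun e => in_polytopeb f d.+1 (add_unit y e))
  (fun e => marginal T e (y e).+1) e0B') => e /in_polytopeP eB emin.
exists e; apply: locally_optimal_optimal; split=> // a b ab.
case: (eqVneq a e) => [ae _ | ae]; first subst a.
  move=> /(eq_in_polytope (move_unit_add_unit y e b)) bB.
  rewrite add_unit_eq add_unit_ne 1?eq_sym //.
  by have := emin b (introT (in_polytopeP _ _ _) bB).
rewrite add_unit_ne // => ya abB.
have {}abB : in_polytope f d (move_unit y a b).
  apply: (in_polytope_move_unit_dominated yB eB ab ya) abB => [|U _ _].
    by rewrite add_unit_ne.
  by rewrite xsum_add_unit leq_addr.
case: (eqVneq b e) => [be | be]; last by rewrite add_unit_ne //; apply: ly.
subst b; rewrite add_unit_eq; apply: le_trans (ly a e ae ya abB) _.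
exact: marginal_homo_units.
Qed.

Lemma locally_optimal_add_load_move d T y h g :
  locally_optimal f d T y -> (0 < y h)%N -> h != g -> in_polytope f d (move_unit y h g) ->
  (forall b, b != h -> in_polytope f d (move_unit y h b) ->
     marginal T g (y g).+1 <= marginal T b (y b).+1) ->
  marginal T g (y g).+1 <= marginal (add_unit T h) h (y h) ->
  locally_optimal f d (add_unit T h) (move_unit y h g).
Proof.
move=> [yB ly] yh hg y'B gmin gh; split=> // a b ab y'a abB.
have gh' : g != h by rewrite eq_sym.
case: (eqVneq a g) => [ag | ag]; first subst a.
  rewrite move_unit_dst // marginal_add_unit_ne //.
  case: (eqVneq b h) => [bh | bh]; first by subst b; rewrite move_unit_src // prednK.
  have bg : b != g by rewrite eq_sym.
  rewrite move_unit_other // marginal_add_unit_ne //; apply: gmin => //.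
  exact: eq_in_polytope (move_unit_trans y h g b) abB.
case: (eqVneq a h) => [ah | ah]; first subst a.
  rewrite move_unit_src // in y'a *.
  apply: le_trans (marginal_add_unit_pred _ _ _) _; first by lia.
  case: (eqVneq b g) => [bg | bg]; first subst b.
    rewrite move_unit_dst // marginal_add_unit_ne //.
    exact: le_trans (ly h g hg yh y'B) (marginal_homo_units _ _ _ _).
  have bh : b != h by rewrite eq_sym.
  rewrite move_unit_other // marginal_add_unit_ne //.
  apply: ly => //; apply: (in_polytope_move_unit_dominated yB y'B ab yh) abB.
    by rewrite move_unit_src.
  by move=> U _ hU; apply: xsum_move_unit_ge => //; rewrite hU.
rewrite move_unit_other // marginal_add_unit_ne // in y'a *.
case: (eqVneq b h) => [bh | bh]; first subst b.
  rewrite move_unit_src // prednK //; apply: le_trans gh.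
  exact: ly a g ag y'a (eq_in_polytope (move_unit_transC yh ah ag) abB).
case: (eqVneq b g) => [bg | bg]; first subst b.
  rewrite move_unit_dst // marginal_add_unit_ne //.
  have agB : in_polytope f d (move_unit y a g).
    apply: (in_polytope_move_unit_dominated yB y'B ab y'a) abB.
      by rewrite move_unit_other.
    by move=> U gU _; apply: xsum_move_unit_ge => //; rewrite gU orbT.
  exact: le_trans (ly a g ab y'a agB) (marginal_homo_units _ _ _ _).
rewrite move_unit_other // marginal_add_unit_ne //.
have [abB' | [agB hbB]] := in_polytope_move_unit2 fP yB yh hg ab y'a ah ag bh y'B abB.
  exact: ly.
exact: le_trans (ly a g ag y'a agB) (gmin b bh hbB).
Qed.

Lemma optimal_add_load d T y h : optimal f d T y -> ~ optimal f d (add_unit T h) y ->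
  (0 < y h)%N /\ exists2 g, g != h & optimal f d (add_unit T h) (move_unit y h g).
Proof.
move=> /optimal_locally[yB ly] nopt.
have [a [b [ab ya abB lt]]] :=
  not_locally_optimal yB (fun l => nopt (locally_optimal_optimal l)).
have ah : a = h.
  apply/eqP; apply: contraTT lt => ah; rewrite -leNgt marginal_add_unit_ne //.
  apply: le_trans (ly a b ab ya abB) (marginal_homo_load _ _) => //.
  by rewrite /add_unit leq_addr.
subst a; split=> //.
have bP : (b != h) && in_polytopeb f d (move_unit y h b).
  by rewrite eq_sym ab; apply/in_polytopeP.
case: (arg_minP (P := fun g => (g != h) && in_polytopeb f d (move_unit y h g))
  (fun g => marginal T g (y g).+1) bP) => g /andP[gh /in_polytopeP gB] gmin.
exists g => //; apply: locally_optimal_optimal.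
apply: locally_optimal_add_load_move => //; first by rewrite eq_sym.
  move=> b' b'h b'B; have b'P : (b' != h) && in_polytopeb f d (move_unit y h b').
    by rewrite b'h; apply/in_polytopeP.
  by have := gmin b' b'P.
apply: le_trans (ltW lt); rewrite marginal_add_unit_ne 1?eq_sym //.
by have := gmin b bP.
Qed.

Lemma locally_optimal_sub_load d T z h : locally_optimal f d T z ->
  (forall a, a != h -> (0 < z a)%N -> in_polytope f d (move_unit z a h) ->
     marginal (sub_unit T h) a (z a) <= marginal (sub_unit T h) h (z h).+1) ->
  locally_optimal f d (sub_unit T h) z.
Proof.
move=> [zB lz] to_h; split=> // a b ab za abB.
case: (eqVneq b h) => [bh | bh]; first by subst b; apply: to_h.
rewrite [X in _ <= X]marginal_sub_unit_ne //; apply: le_trans _ (lz a b ab za abB).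
by apply: marginal_homo_load; [exact: za | exact: leq_subr].
Qed.

Lemma optimal_add_unit_sub_load d T y h : optimal f d T y ->
  optimal f d.+1 T (add_unit y h) -> optimal f d.+1 (sub_unit T h) (add_unit y h).
Proof.
move=> /optimal_locally[yB ly] /optimal_locally[zB lz]; apply: locally_optimal_optimal.
apply: locally_optimal_sub_load (conj zB lz) _ => a ah.
rewrite add_unit_ne // add_unit_eq marginal_sub_unit_ne // => ya ahB.
apply: le_trans (ly a h ah ya _) (marginal_sub_unit_succ _ _ _) => //.
apply: (in_polytope_move_unit_dominated yB zB ah ya) ahB; first by rewrite add_unit_ne.
by move=> U _ _; rewrite xsum_add_unit leq_addr.
Qed.

Lemma optimal_move_unit_sub_load d T y h0 h : optimal f d T y -> h0 != h ->
  (0 < y h0)%N -> optimal f d (add_unit T h0) (move_unit y h0 h) ->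
  optimal f d (sub_unit (add_unit T h0) h) (move_unit y h0 h).
Proof.
move=> /optimal_locally[yB ly] h0h yh0 /optimal_locally[zB lz].
apply: locally_optimal_optimal; apply: locally_optimal_sub_load (conj zB lz) _ => a ah za azB.
have hh0 : h != h0 by rewrite eq_sym.
rewrite move_unit_dst //; apply: le_trans _ (marginal_sub_unit_succ _ _ _) => //.
rewrite marginal_add_unit_ne // marginal_sub_unit_ne //.
case: (eqVneq a h0) => [ah0 | ah0]; first subst a.
  rewrite move_unit_src // in za *.
  by apply: le_trans (marginal_add_unit_pred _ _ _) (ly h0 h h0h yh0 zB); lia.
rewrite move_unit_other // in za *; rewrite marginal_add_unit_ne //.
apply: ly => //; apply: (in_polytope_move_unit_dominated yB zB ah za) azB.
  by rewrite move_unit_other.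
by move=> U hU _; apply: xsum_move_unit_ge => //; rewrite hU orbT.
Qed.

End RegularCost.
End SeparableCost.

Section Game.
Variables (R : realDomainType) (n m : nat) (f : 'I_n -> {set 'I_m} -> nat)
  (C : 'I_n -> 'I_m -> nat -> nat -> R).
Hypothesis fP : forall i, polymatroid_rank (f i).
Hypothesis CR : forall i e, regular (C i e).
Implicit Types (x : 'I_n -> 'I_m -> nat) (y : 'I_m -> nat) (d : 'I_n -> nat).

Definition load x e := (\sum_j x j e)%N.

Definition equilibrium d x :=
  forall i, optimal (C i) (f i) (d i) (others_load x i) (x i).

Lemma deviate_eq x k y : deviate x k y k = y.
Proof. by rewrite /deviate eqxx. Qed.

Lemma deviate_ne x k y j : j != k -> deviate x k y j = x j.
Proof. by move=> jk; rewrite /deviate (negbTE jk). Qed.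

Lemma sum_deviate (P : pred 'I_n) (F : 'I_n -> ('I_m -> nat) -> nat) x k y : P k ->
  (\sum_(j | P j) F j (deviate x k y j) + F k (x k) =
   \sum_(j | P j) F j (x j) + F k y)%N.
Proof.
move=> Pk; rewrite !(bigD1 k Pk) /= deviate_eq.
rewrite (eq_bigr (fun j => F j (x j))) => [|j /andP[_ jk]]; last by rewrite deviate_ne.
lia.
Qed.

Lemma load_deviate x k y e : (load (deviate x k y) e + x k e = load x e + y e)%N.
Proof. exact: (@sum_deviate xpredT (fun _ z => z e)). Qed.

Lemma others_load_deviate x k y q e : q != k ->
  (others_load (deviate x k y) q e + x k e = others_load x q e + y e)%N.
Proof. by move=> qk; apply: (@sum_deviate (fun j => j != q) (fun _ z => z e)); rewrite eq_sym. Qed.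

Lemma others_load_deviate_eq x k y : others_load (deviate x k y) k =1 others_load x k.
Proof. by move=> e; apply: eq_bigr => j jk; rewrite deviate_ne. Qed.

Lemma others_load_add_self x i e : (others_load x i e + x i e = load x e)%N.
Proof. by rewrite /others_load /load [in RHS](bigD1 i) //= addnC. Qed.

Lemma private_cost_deviate x i y :
  private_cost C (deviate x i y) i = sep_cost (C i) (others_load x i) y.
Proof. by apply: eq_bigr => e _; rewrite deviate_eq others_load_deviate_eq. Qed.

Section Repair.
Variables (d : 'I_n -> nat) (L0 : 'I_m -> nat).

Definition repair_inv x h := load x =1 add_unit L0 h /\
  forall i, optimal (C i) (f i) (d i) (sub_unit (others_load x i) h) (x i).

(* While e carries the extra unit, a player holding a units of e sees the
   others' load L0 e + 1 - a: this prices both the unit given up at h and the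
   unit gained at g in a repair move. *)
Definition unit_cost i e a := Cminus (C i e) a (L0 e + 1 - a).

Definition unit_rank i e a :=
  #|[set p : 'I_m * 'I_(\sum_j d j).+1 | unit_cost i p.1 p.2 < unit_cost i e a]|.

Definition potential x := (\sum_i \sum_e \sum_(a < x i e) unit_rank i e a.+1)%N.

Lemma unit_rank_lt i e1 a1 e2 a2 : (a1 <= \sum_j d j)%N ->
  unit_cost i e1 a1 < unit_cost i e2 a2 -> (unit_rank i e1 a1 < unit_rank i e2 a2)%N.
Proof.
move=> a1D lt; apply: proper_card; apply/properP; split.
  by apply/subsetP => p; rewrite !inE => /lt_trans; apply.
by exists (e1, inord a1); rewrite !inE /= inordK ?ltnS ?ltxx.
Qed.

Lemma sum_unit_rank_succ i e t : (\sum_(a < t.+1) unit_rank i e a.+1 =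
  \sum_(a < t) unit_rank i e a.+1 + unit_rank i e t.+1)%N.
Proof. by rewrite big_ord_recr. Qed.

Lemma potential_move x k h g : (0 < x k h)%N -> h != g ->
  ((x k g).+1 <= \sum_j d j)%N -> unit_cost k g (x k g).+1 < unit_cost k h (x k h) ->
  (potential (deviate x k (move_unit (x k) h g)) < potential x)%N.
Proof.
move=> xh hg gD lt; have := unit_rank_lt gD lt.
have := @sum_deviate xpredT (fun j y => \sum_e \sum_(a < y e) unit_rank j e a.+1)%N x k
  (move_unit (x k) h g) isT.
have := sumn_move_unit (fun e t => \sum_(a < t) unit_rank k e a.+1)%N hg xh.
move: (x k h) xh => [|t] // _; cbv beta; rewrite !sum_unit_rank_succ succnK /potential.
by set y' := move_unit (x k) h g; lia.
Qed.

Lemma repair_inv_move x k h g : repair_inv x h -> (0 < x k h)%N ->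
  (0 < others_load x k h)%N -> h != g ->
  optimal (C k) (f k) (d k) (others_load x k) (move_unit (x k) h g) ->
  repair_inv (deviate x k (move_unit (x k) h g)) g.
Proof.
move=> [xL xopt] xh Oh hg y'opt; split=> [e | q].
  have := load_deviate x k (move_unit (x k) h g) e; rewrite xL /add_unit.
  case: (eqVneq e h) => [-> | eh]; first by rewrite move_unit_src // (negbTE hg); lia.
  case: (eqVneq e g) => [-> | eg]; first by rewrite move_unit_dst //; lia.
  by rewrite move_unit_other //; lia.
case: (eqVneq q k) => [-> | qk].
  rewrite deviate_eq; apply: (eq_optimal _ (frefl _) (optimal_move_unit_sub_load
    (CR k) (fP k) (xopt k) hg xh (eq_optimal _ (frefl _) y'opt))) => e.
    by rewrite /sub_unit add_sub_unit // others_load_deviate_eq.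
  by rewrite add_sub_unit.
rewrite deviate_ne //; apply: eq_optimal (xopt q) => // e.
have := others_load_deviate x (move_unit (x k) h g) e qk; rewrite /sub_unit.
case: (eqVneq e h) => [-> | eh]; first by rewrite move_unit_src // (negbTE hg); lia.
case: (eqVneq e g) => [-> | eg]; first by rewrite move_unit_dst //; lia.
by rewrite move_unit_other //; lia.
Qed.

Lemma repair_step x h : repair_inv x h -> ~ equilibrium d x ->
  exists x' g, repair_inv x' g /\ (potential x' < potential x)%N.
Proof.
move=> [xL xopt] /not_all_ex_not[k nopt]; set O := others_load x k.
have Oh : (0 < O h)%N.
  rewrite lt0n; apply: contra_notN nopt => /eqP O0.
  exact: eq_optimal (sub_unit_id O0) (frefl _) (xopt k).
have [xh [g gh y'opt]] := optimal_add_load (CR k) (fP k) (xopt k)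
  (fun o => nopt (eq_optimal (add_sub_unit Oh) (frefl _) o)).
have {}y'opt := eq_optimal (add_sub_unit Oh) (frefl _) y'opt.
have hg : h != g by rewrite eq_sym.
exists (deviate x k (move_unit (x k) h g)), g; split.
  exact: repair_inv_move.
apply: potential_move => //.
  have := in_polytope_le_demand g y'opt.1; rewrite move_unit_dst // => /leq_trans; apply.
  by rewrite (bigD1 k) //= leq_addr.
have lt : sep_cost (C k) O (move_unit (x k) h g) < sep_cost (C k) O (x k).
  rewrite ltNge; apply/negP => le; apply: nopt; split=> [|z zB]; first exact: (xopt k).1.
  exact: le_trans le (y'opt.2 z zB).
move: lt; rewrite sep_cost_move_unit // /marginal /unit_cost.
have := others_load_add_self x k g; have := others_load_add_self x k h; rewrite !xL /add_unit eqxx.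
rewrite (negbTE gh) -/O => Oh' Og'.
have -> : O h = (L0 h + 1 - x k h)%N by lia.
have -> : O g = (L0 g + 1 - (x k g).+1)%N by lia.
lra.
Qed.

Lemma repair x h : repair_inv x h -> exists x', equilibrium d x'.
Proof.
have [N] := ubnP (potential x); elim: N x h => // N IH x h ltN inv.
have [NE | nNE] := classic (equilibrium d x); first by exists x.
have [x' [g [inv' lt]]] := repair_step inv nNE.
by apply: (IH x' g) => //; apply: leq_trans lt ltN.
Qed.

End Repair.

Lemma repair_inv_add_unit d x i e : equilibrium (sub_unit d i) x -> (0 < d i)%N ->
  optimal (C i) (f i) (d i) (others_load x i) (add_unit (x i) e) ->
  repair_inv d (load x) (deviate x i (add_unit (x i) e)) e.
Proof.
move=> xNE di xiopt; split=> [e' | q].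
  by have := load_deviate x i (add_unit (x i) e) e'; rewrite /add_unit; lia.
case: (eqVneq q i) => [-> | qi].
  have di' : (sub_unit d i i).+1 = d i by rewrite /sub_unit eqxx subn1 prednK.
  have := optimal_add_unit_sub_load (CR i) (fP i) (xNE i); rewrite di' => /(_ e xiopt).
  by rewrite deviate_eq; apply: eq_optimal => // e'; rewrite /sub_unit others_load_deviate_eq.
rewrite deviate_ne //; move: (xNE q); rewrite {1}/sub_unit (negbTE qi) subn0.
apply: eq_optimal => // e'; have := others_load_deviate x (add_unit (x i) e) e' qi.
by rewrite /sub_unit /add_unit; lia.
Qed.

Lemma equilibrium_zero d : (forall i, d i = 0%N) -> equilibrium d (fun _ _ => 0%N).
Proof.
move=> d0 i; rewrite d0; split=> [|z zB]; first by split=> [U|]; rewrite /xsum big1.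
rewrite le_eqVlt; apply/orP; left; apply/eqP/eq_bigr => e _.
by have := in_polytope_le_demand e zB; rewrite leqn0 => /eqP->.
Qed.

Lemma exists_equilibrium d : (forall i, d i <= f i setT)%N -> exists x, equilibrium d x.
Proof.
have [s] := ubnP (\sum_i d i); elim: s d => // s IH d lts dle.
have [i di | d0] := pickP (fun i => 0 < d i)%N; last first.
  exists (fun _ _ => 0%N); apply: equilibrium_zero => i.
  by apply/eqP; rewrite -leqn0 leqNgt d0.
have [x xNE] : exists x, equilibrium (sub_unit d i) x.
  apply: IH => [|j]; last by apply: leq_trans (dle j); rewrite leq_subr.
  rewrite (bigD1 i) //= (eq_bigr d) => [|j ji]; last by rewrite /sub_unit (negbTE ji) subn0.
  by move: lts; rewrite (bigD1 i) //= /sub_unit ?eqxx; lia.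
have di' : (sub_unit d i i).+1 = d i by rewrite /sub_unit eqxx subn1 prednK.
have lt : (sub_unit d i i < f i setT)%N by rewrite di'.
have [e] := optimal_add_unit (CR i) (fP i) (xNE i) lt; rewrite di' => xiopt.
exact: repair (repair_inv_add_unit xNE di xiopt).
Qed.

End Game.

Theorem theorem5p1 (R : realType) (n m : nat)
  (f : 'I_n -> {set 'I_m} -> nat) (d : 'I_n -> nat)
  (C : 'I_n -> 'I_m -> nat -> nat -> R) :
  (forall i, polymatroid_rank (f i)) ->
  (forall i, (d i <= f i [set: 'I_m])%N) ->
  (forall i e x t, 0 <= C i e x t) ->
  (forall i e, regular (C i e)) ->
  exists x : 'I_n -> 'I_m -> nat,
    (forall i, in_polytope (f i) (d i) (x i)) /\
    (forall i (y : 'I_m -> nat), in_polytope (f i) (d i) y ->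
       private_cost C x i <= private_cost C (deviate x i y) i).
Proof.
move=> fP dle _ CR; have [x xNE] := exists_equilibrium fP CR dle.
exists x; split=> [i | i y yB]; first by case: (xNE i).
by rewrite private_cost_deviate; apply: (xNE i).2.
Qed.
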